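(* Let $G=GL_{d+1}(L)$ with the setting below and $\xi$ given by $(a_1,\dots,a_{d+1})$, $a_1\le\dots\le a_{d+1}$. Then $T'_\xi(K)$ consists of all $\zeta\in T'(K)$ such that the polygon $\mathcal{P}\big((\mathrm{val}_L(\zeta_1),\dots,\mathrm{val}_L(\zeta_{d+1}))^{dom}\big)$ lies on or above the polygon $\mathcal{P}(a_1,a_2+[L:\mathbb{Q}_p],\dots,a_{d+1}+d[L:\mathbb{Q}_p])$ and both polygons have the same endpoint.
   Context: $L$ is a finite extension of $\mathbb{Q}_p$ with ring of integers $o_L$, prime element $\pi_L$, residue field cardinality $q$, normalized absolute value $|\ |_L$; $K$ a complete extension field of $\mathbb{Q}_p$ containing $L$; $\mathrm{val}_L:K^\times\to\mathbb{R}$ with $\mathrm{val}_L(L^\times)=\mathbb{Z}$. $G=GL_{d+1}(L)$, $P$ lower triangular Borel, $T$ diagonal torus, $U_0=GL_{d+1}(o_L)$, $\Lambda=T/(T\cap U_0)$, $\lambda:T\to\Lambda$ the projection, $W=S_{d+1}$ acting by conjugation, $\Phi^+$ roots of $T$ in $\mathrm{Lie}(P)$, $T^{--}=\{t:|\alpha(t)|_L\ge1\ \forall\alpha\in\Phi^+\}$, $\Lambda^{--}=\lambda(T^{--})$. $\xi(\mathrm{diag}(g_i))=\prod g_i^{a_i}$. $\gamma_\xi(w,\lambda(t)):=\big(\prod_{\alpha\in\Phi^+\setminus{}^{w^{-1}}\Phi^+}|\alpha(t)|_L\big)\pi_L^{\mathrm{val}_L(\xi({}^wt))-\mathrm{val}_L(\xi(t))}$,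 $\gamma_\xi^{dom}(\lambda):=\gamma_\xi(w,\lambda)$ for $w$ with ${}^w\lambda\in\Lambda^{--}$. $T'(K)=\mathrm{Hom}(\Lambda,K^\times)$, $T'_\xi(K)=\{\zeta:|\zeta(\lambda)|\le|\gamma_\xi^{dom}(\lambda)|\ \forall\lambda\}$. Coordinates: $\zeta_i:=q^{i-1}\pi_L^{a_i}\zeta(\lambda_{\{i\}})$ where $\lambda_{\{i\}}$ is the class of the diagonal matrix with $\pi_L$ in place $i$ and $1$ elsewhere. For $r\in\mathbb{R}^{d+1}$, $r^{dom}$ is its rearrangement in increasing order, and for an increasing sequence $r_1\le\dots\le r_{d+1}$, $\mathcal{P}(r)$ is the convex polygon through $(0,0),(1,r_1),(2,r_1+r_2),\dots,(d+1,r_1+\dots+r_{d+1})$. *)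

From HB Require Import structures.
From mathcomp Require Import all_boot all_order all_algebra all_fingroup.
From mathcomp Require Import reals exp.
Set Implicit Arguments. Unset Strict Implicit. Unset Printing Implicit Defensive.
Import Order.TTheory GRing.Theory Num.Theory.
Local Open Scope ring_scope.

(* ---------- The lattice Lambda = T / (T cap U_0) ----------
   An element t = diag(t_1,...,t_{d+1}) of T is, modulo T cap U_0 = diagonal
   units of o_L, determined by (val_L t_1, ..., val_L t_{d+1}) in Z^{d+1}.
   So Lambda = Z^{d+1}; indices are 0-based: 'I_(d.+1) = {0,...,d},
   index i here is index i+1 of the paper. *)
Definition Lam (d : nat) := {ffun 'I_d.+1 -> int}.

(* lambda_{{i}} : class of diag(1,..,pi_L (place i),..,1) *)
Definition lam_e (d : nat) (i : 'I_d.+1) : Lam d := [ffun j => ((j == i) : nat)%:Z].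

(* W = S_{d+1} acting by conjugation with the permutation matrix of w
   (P_w e_i = e_{w i}):  (w t w^{-1})_j = t_{w^{-1} j}. *)
Definition actW (d : nat) (w : 'S_d.+1) (l : Lam d) : Lam d :=
  [ffun j => l ((w^-1)%g j)].

(* Phi^+ = roots of T in Lie(P), P lower triangular: alpha_{ij}(t) = t_i/t_j
   for i > j.  On lambda(t) with valuations m: |alpha_{ij}(t)|_L = q^(m_j - m_i).
   Lambda^{--} = lambda(T^{--}) : |alpha(t)|_L >= 1 for all alpha in Phi^+. *)
Definition antidom (d : nat) (l : Lam d) : bool :=
  [forall i : 'I_d.+1, forall j : 'I_d.+1, (j < i)%N ==> (l i <= l j)].

(* (w alpha)(t) = alpha(w^{-1} t w), so w alpha_{ij} = alpha_{w i, w j}, and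
   alpha_{ij} in Phi^+ \ {}^{w^{-1}}Phi^+  iff  i > j and w i < w j.
   Exponent of q in prod_{alpha in Phi^+ \ {}^{w^{-1}}Phi^+} |alpha(t)|_L : *)
Definition gamma_qexp (d : nat) (w : 'S_d.+1) (l : Lam d) : int :=
  \sum_(i : 'I_d.+1) \sum_(j : 'I_d.+1 | (j < i)%N && (w i < w j)%N) (l j - l i).

(* val_L(xi(t)) = sum_i a_i m_i; exponent of pi_L in gamma_xi(w, lambda) *)
Definition xi_val (d : nat) (a : 'I_d.+1 -> int) (l : Lam d) : int :=
  \sum_(i : 'I_d.+1) a i * l i.

Definition gamma_piexp (d : nat) (a : 'I_d.+1 -> int) (w : 'S_d.+1) (l : Lam d) : int :=
  xi_val a (actW w l) - xi_val a l.

(* gamma_xi(w, lambda) as an element of K (the rational number q^k lies in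
   Q subset L subset K). *)
Definition gamma_xi (K : fieldType) (q : nat) (pi : K) (d : nat)
    (a : 'I_d.+1 -> int) (w : 'S_d.+1) (l : Lam d) : K :=
  ((q%:R : K) ^ gamma_qexp w l) * (pi ^ gamma_piexp a w l).

Definition dom_perm (d : nat) (l : Lam d) : 'S_d.+1 :=
  odflt 1%g [pick w : 'S_d.+1 | antidom (actW w l)].

Definition gamma_dom (K : fieldType) (q : nat) (pi : K) (d : nat)
    (a : 'I_d.+1 -> int) (l : Lam d) : K :=
  gamma_xi q pi a (dom_perm l) l.

Definition is_char (K : fieldType) (d : nat) (zeta : Lam d -> K) : Prop :=
  (forall l, zeta l != 0) /\ (forall l m, zeta (l + m) = zeta l * zeta m).

Definition in_Txi (R : realType) (K : fieldType) (absK : K -> R) (q : nat) (pi : K)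
    (d : nat) (a : 'I_d.+1 -> int) (zeta : Lam d -> K) : Prop :=
  forall l : Lam d, absK (zeta l) <= absK (gamma_dom q pi a l).

(* additive valuation on K^x (values on 0 are irrelevant) *)
Definition is_valuation (R : realType) (K : fieldType) (v : K -> R) : Prop :=
  (forall x y, x != 0 -> y != 0 -> v (x * y) = v x + v y) /\
  (forall x y, x != 0 -> y != 0 -> x + y != 0 -> Num.min (v x) (v y) <= v (x + y)).

(* coordinates zeta_i := q^{i-1} pi_L^{a_i} zeta(lambda_{{i}}) (paper's 1-based i;
   here 0-based i, so the power of q is i) *)
Definition zeta_coord (K : fieldType) (q : nat) (pi : K) (d : nat)
    (a : 'I_d.+1 -> int) (zeta : Lam d -> K) (i : 'I_d.+1) : K :=
  (q%:R : K) ^+ i * pi ^ a i * zeta (lam_e i).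

Definition rdom (R : realType) (r : seq R) : seq R := sort (fun x y : R => x <= y) r.

(* The polygon P(r) (for r increasing) as the piecewise linear function on
   [0, size r] through (k, r_1 + ... + r_k), k = 0..size r:
   P(r)(x) = sum_i r_i * clamp(x - i, 0, 1)  (0-based i). *)
Definition polygon (R : realType) (r : seq R) (x : R) : R :=
  \sum_(i < size r) r`_i * Num.min 1 (Num.max 0 (x - i%:R)).

Definition above_same_end (R : realType) (N : nat) (r s : seq R) : Prop :=
  (forall x : R, 0 <= x <= N%:R -> polygon s x <= polygon r x) /\
  polygon r N%:R = polygon s N%:R.

(* Put b_i = a_i + i [L:Q_p] and c_i = val_L(zeta_i).  Since val_L o zeta is additive,
   val_L(gamma_xi(w, lambda)) = sum_i (b_(w i) - b_i) lambda_i and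
   val_L(zeta(lambda)) = sum_i (c_i - b_i) lambda_i, so zeta lies in T'_xi(K) iff
   sum_k b_k mu_k <= sum_i c_i lambda_i for every lambda, where mu is the nonincreasing
   rearrangement of lambda.  Testing lambda = +-1 and the indicators of the k smallest c_i
   gives: every prefix sum of b is at most the sum of the k smallest c_i, with equality
   for k = d + 1.  Conversely these inequalities give the bound by Abel summation
   against the nonincreasing mu.  They are the vertex inequalities of the two polygons. *)

From HB Require Import structures.
From mathcomp Require Import all_boot all_order all_algebra all_fingroup.
From mathcomp Require Import reals exp.
From mathcomp Require Import lra zify ring.
Import Order.TTheory GRing.Theory Num.Theory.
Local Open Scope ring_scope.
Set Implicit Arguments. Unset Strict Implicit.

Section Valuation.
Variables (R : realType) (K : fieldType) (v : K -> R).
Hypothesis Hv : is_valuation v.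

Lemma valuationM x y : x != 0 -> y != 0 -> v (x * y) = v x + v y.
Proof. exact: Hv.1. Qed.

Lemma valuation1 : v 1 = 0.
Proof. by have := valuationM (oner_neq0 K) (oner_neq0 K); rewrite mulr1; lra. Qed.

Lemma valuationXn x k : x != 0 -> v (x ^+ k) = k%:R * v x.
Proof.
move=> x0; elim: k => [|k IHk]; first by rewrite expr0 valuation1 mul0r.
by rewrite exprS valuationM ?expf_neq0 // IHk mulrSr mulrDl mul1r addrC.
Qed.

Lemma valuationV x : x != 0 -> v x^-1 = - v x.
Proof.
move=> x0; have := valuationM (invr_neq0 x0) x0.
by rewrite mulVf // valuation1; lra.
Qed.

Lemma valuationXz x (z : int) : x != 0 -> v (x ^ z) = z%:~R * v x.
Proof.
move=> x0; case: z => k; first by rewrite -exprnP valuationXn.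
by rewrite NegzE -exprnN valuationV ?expf_neq0 // valuationXn // mulrNz mulNr.
Qed.

End Valuation.

Lemma ler_powR_inv (R : realType) (b x y : R) :
  1 < b -> (powR b^-1 x <= powR b^-1 y) = (y <= x).
Proof.
move=> b_gt1; have b_gt0 : 0 < b by apply: lt_trans b_gt1.
rewrite /powR invr_eq0 gt_eqF // ler_expR ler_nM2r //.
by apply: ln_lt0; rewrite invr_gt0 b_gt0 invf_lt1.
Qed.

Section ValuationOfCharacter.
Variables (R : realType) (K : fieldType) (v : K -> R) (d : nat) (zeta : Lam d -> K).
Hypotheses (Hv : is_valuation v) (Hzeta : is_char zeta).

Definition val_char (l : Lam d) : R := v (zeta l).

Lemma val_char_is_nmod_morphism : GRing.nmod_morphism val_char.
Proof.
have [zeta_neq0 zetaD] := Hzeta.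
have val_charD : {morph val_char : l m / l + m} by move=> l m; rewrite /val_char zetaD valuationM.
split=> //; have := val_charD 0 0; rewrite addr0; lra.
Qed.

HB.instance Definition _ := GRing.isNmodMorphism.Build (Lam d) R val_char
  val_char_is_nmod_morphism.

Lemma sum_lam_e (l : Lam d) : \sum_i lam_e i *~ l i = l.
Proof.
apply/ffunP => j; rewrite sum_ffunE (bigD1 j) //= ffunMzE ffunE eqxx intz big1 ?addr0 //.
by move=> i ij; rewrite ffunMzE ffunE eq_sym (negbTE ij) mul0rz.
Qed.

Lemma val_charE (l : Lam d) : v (zeta l) = \sum_i (l i)%:~R * v (zeta (lam_e i)).
Proof.
rewrite -/(val_char l) -{1}[l]sum_lam_e raddf_sum; apply: eq_bigr => i _.
by rewrite raddfMz mulrzl.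
Qed.

End ValuationOfCharacter.

Lemma sum_ord_ltn (n m : nat) : (\sum_(k < n) (k < m : nat) = minn m n)%N.
Proof.
elim: n => [|n IHn]; first by rewrite big_ord0 minn0.
by rewrite big_ord_recr /= IHn; case: ltnP => /=; lia.
Qed.

Lemma num_perm_ltn (n : nat) (w : 'S_n) (i : 'I_n) :
  (\sum_j (w j < w i : nat) = w i)%N.
Proof.
rewrite (reindex_inj (@perm_inj _ w^-1%g)) /=.
under eq_bigr do rewrite permKV.
by rewrite sum_ord_ltn; apply/minn_idPl/ltnW.
Qed.

Section GammaExponents.
Variables (d : nat) (w : 'S_d.+1) (l : Lam d).

(* Each i contributes #{j > i | w j < w i} - #{j < i | w i < w j} = w i - i. *)
Lemma gamma_qexpE : gamma_qexp w l = \sum_i ((w i)%:Z - (i : nat)%:Z) * l i.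
Proof.
pose inv (i j : 'I_d.+1) : nat := (j < i)%N && (w i < w j)%N.
have shift i : (w i)%:Z - (i : nat)%:Z = \sum_j ((inv j i)%:Z - (inv i j)%:Z).
  have -> : (i : nat) = (\sum_(j : 'I_d.+1) (j < i : nat))%N.
    by rewrite sum_ord_ltn; apply/esym/minn_idPl/ltnW.
  rewrite -{1}(num_perm_ltn w i) !(big_morph Posz PoszD erefl) -sumrB.
  apply: eq_bigr => j _; rewrite /inv.
  case: (ltngtP j i) => [ji|ij|/val_inj->]; last by rewrite ltnn subrr.
    by case: ltngtP => // /val_inj/perm_inj eji; rewrite eji ltnn in ji.
  by case: ltngtP => // /val_inj/perm_inj eji; rewrite eji ltnn in ij.
under [RHS]eq_bigr => i _ do rewrite shift mulr_suml.
under [RHS]eq_bigr => i _ do under eq_bigr => j _ do rewrite mulrBl.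
under [RHS]eq_bigr => i _ do rewrite sumrB.
rewrite sumrB exchange_big -sumrB; apply: eq_bigr => i _.
rewrite big_mkcond -sumrB; apply: eq_bigr => j _.
by rewrite /inv; case: ifP => _; rewrite ?mul1r ?mul0r ?subrr.
Qed.

Lemma gamma_piexpE (a : 'I_d.+1 -> int) :
  gamma_piexp a w l = \sum_i (a (w i) - a i) * l i.
Proof.
rewrite /gamma_piexp /xi_val (reindex_inj (@perm_inj _ w)) -sumrB.
by apply: eq_bigr => i _; rewrite ffunE permK mulrBl.
Qed.

End GammaExponents.

Lemma sum_actW (V : nmodType) (d : nat) (w : 'S_d.+1) (l : Lam d)
    (F : 'I_d.+1 -> int -> V) :
  \sum_k F k (actW w l k) = \sum_i F (w i) (l i).
Proof.
by rewrite (reindex_inj (@perm_inj _ w)); apply: eq_bigr => i _; rewrite ffunE permK.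
Qed.

Definition xi_slope (R : realType) (degL d : nat) (a : 'I_d.+1 -> int) (i : 'I_d.+1) : R :=
  (a i)%:~R + (i : nat)%:R * degL%:R.

Definition pairing_bounded (R : realDomainType) (d : nat) (b c : 'I_d.+1 -> R) : Prop :=
  forall l : Lam d, \sum_k b k * (actW (dom_perm l) l k)%:~R <= \sum_i c i * (l i)%:~R.

Section ValuationOfGamma.
Variables (R : realType) (K : fieldType) (v : K -> R) (pi : K) (q degL d : nat).
Variable (a : 'I_d.+1 -> int).
Hypotheses (Hv : is_valuation v) (Hq0 : (q%:R : K) != 0) (Hpi0 : pi != 0).
Hypotheses (Hvpi : v pi = 1) (Hvq : v (q%:R : K) = degL%:R).

Local Notation b := (xi_slope R degL a).

Lemma gamma_xi_neq0 w l : gamma_xi q pi a w l != 0.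
Proof. by rewrite mulf_neq0 ?expfz_neq0. Qed.

Lemma valuation_gamma_xi w l :
  v (gamma_xi q pi a w l) = \sum_i (b (w i) - b i) * (l i)%:~R.
Proof.
rewrite valuationM ?expfz_neq0 // !valuationXz // Hvq Hvpi mulr1.
rewrite gamma_qexpE gamma_piexpE !rmorph_sum mulr_suml -big_split /=.
by apply: eq_bigr => i _; rewrite /xi_slope !(intrM, intrB) /=; ring.
Qed.

Lemma valuation_zeta_coord (zeta : Lam d -> K) i : is_char zeta ->
  v (zeta_coord q pi a zeta i) = b i + v (zeta (lam_e i)).
Proof.
case=> zeta_neq0 _; rewrite !valuationM ?mulf_neq0 ?expf_neq0 ?expfz_neq0 //.
by rewrite valuationXn // valuationXz // Hvq Hvpi mulr1 /xi_slope; lra.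
Qed.

Variables (absK : K -> R) (zeta : Lam d -> K).
Hypothesis Habs : forall x : K, x != 0 -> absK x = powR (q%:R^-1) (v x).
Hypotheses (Hq : (1 < q)%N) (Hzeta : is_char zeta).

Lemma in_TxiE :
  in_Txi absK q pi a zeta <-> pairing_bounded b (fun i => v (zeta_coord q pi a zeta i)).
Proof.
have [zeta_neq0 _] := Hzeta.
suff step l : (absK (zeta l) <= absK (gamma_dom q pi a l)) =
    (\sum_k b k * (actW (dom_perm l) l k)%:~R <=
     \sum_i v (zeta_coord q pi a zeta i) * (l i)%:~R).
  by split=> H l; [rewrite -step | rewrite step].
rewrite !Habs ?gamma_xi_neq0 // ler_powR_inv ?ltr1n // valuation_gamma_xi.
rewrite (val_charE Hv Hzeta) (sum_actW _ _ (fun k m => b k * m%:~R)) -subr_ge0.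
rewrite -[in RHS]subr_ge0 -!sumrB; congr (0 <= _); apply: eq_bigr => i _.
by rewrite valuation_zeta_coord //; ring.
Qed.

End ValuationOfGamma.

Section EnumRearrangement.
Variables (T : eqType) (n : nat).

Lemma perm_eq_map_enumP (f : 'I_n -> T) (s : seq T) :
  reflect (exists p : 'S_n, s = [seq f (p i) | i <- enum 'I_n])
          (perm_eq s [seq f i | i <- enum 'I_n]).
Proof.
have -> : [seq f i | i <- enum 'I_n] = mktuple f by [].
apply: (iffP idP) => [/tuple_permP[p ->] | [p ->]].
  by exists p; apply: eq_map => i; rewrite tnth_mktuple.
apply/(tuple_permP (s := [tuple f (p i) | i < n])); exists p.
by apply: eq_map => i; rewrite tnth_mktuple.
Qed.

Lemma sorted_map_enum (r : rel T) (f : 'I_n -> T) : transitive r -> reflexive r ->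
  sorted r [seq f i | i <- enum 'I_n] -> forall i j : 'I_n, (i <= j)%N -> r (f i) (f j).
Proof.
move=> r_tr r_refl /(sorted_leq_nth r_tr r_refl) le_nth i j ij.
have nth_f (k : 'I_n) : nth (f i) [seq f i | i <- enum 'I_n] k = f k.
  by rewrite (nth_map k) ?size_enum_ord // nth_ord_enum.
by rewrite -(nth_f i) -(nth_f j) le_nth // inE size_map size_enum_ord.
Qed.

End EnumRearrangement.

Lemma sort_map_enum (R : realDomainType) (n : nat) (c : 'I_n -> R) :
  exists2 rho : 'S_n,
    sort <=%R [seq c i | i <- enum 'I_n] = [seq c (rho i) | i <- enum 'I_n]
    & forall i j : 'I_n, (i <= j)%N -> c (rho i) <= c (rho j).
Proof.
have : perm_eq (sort <=%R [seq c i | i <- enum 'I_n]) [seq c i | i <- enum 'I_n].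
  by rewrite perm_sort.
case/perm_eq_map_enumP => rho sorted_c.
exists rho => //; apply: (sorted_map_enum (r := <=%R)) => //; first exact: le_trans.
by rewrite -sorted_c sort_sorted //; apply: le_total.
Qed.

Section Antidominant.
Variable d : nat.

Lemma antidom_sorted (u : Lam d) : antidom u = sorted >=%R [seq u j | j <- enum 'I_d.+1].
Proof.
apply/idP/idP => [/forallP anti_u | sorted_u].
  apply: (homo_sorted (e := relpre val ltn)); last first.
    by rewrite -sorted_map val_enum_ord iota_ltn_sorted.
  by move=> i j /= ij; move/forallP/(_ i)/implyP: (anti_u j); apply.
apply/forallP => i; apply/forallP => j; apply/implyP => /ltnW ji.
exact: (sorted_map_enum ge_trans (@lexx _ _) sorted_u).
Qed.

Lemma perm_eq_actW (w : 'S_d.+1) (l : Lam d) :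
  perm_eq [seq actW w l j | j <- enum 'I_d.+1] [seq l j | j <- enum 'I_d.+1].
Proof. by apply/perm_eq_map_enumP; exists w^-1%g; apply: eq_map => j; rewrite ffunE. Qed.

Lemma antidom_actW_eq (w w' : 'S_d.+1) (l : Lam d) :
  antidom (actW w l) -> antidom (actW w' l) -> actW w l = actW w' l.
Proof.
rewrite !antidom_sorted => sorted_wl sorted_w'l.
have /eq_in_map wl_w'l :
    [seq actW w l j | j <- enum 'I_d.+1] = [seq actW w' l j | j <- enum 'I_d.+1].
  apply: (sorted_eq ge_trans ge_anti) sorted_wl sorted_w'l _.
  by rewrite (perm_trans (perm_eq_actW w l)) // perm_sym perm_eq_actW.
by apply/ffunP => j; apply: wl_w'l; rewrite mem_enum.
Qed.

Lemma antidom_dom_perm (l : Lam d) : antidom (actW (dom_perm l) l).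
Proof.
rewrite /dom_perm; case: pickP => [w -> // | no_antidom] /=.
have : perm_eq (sort >=%R [seq l j | j <- enum 'I_d.+1]) [seq l j | j <- enum 'I_d.+1].
  by rewrite perm_sort.
case/perm_eq_map_enumP => p sorted_l; move: (no_antidom p^-1%g).
rewrite antidom_sorted; under eq_map do rewrite ffunE invgK.
by rewrite -sorted_l sort_sorted // => x y; apply: le_total.
Qed.

End Antidominant.

Section PrefixSums.
Variable R : realType.

Definition prefix_sum (r : seq R) (k : nat) : R := \sum_(i < k) r`_i.

Lemma abel_summation (delta g : nat -> R) (n : nat) :
  \sum_(i < n) delta i * g i =
  \sum_(i < n) (\sum_(j < i.+1) delta j) * (g i - g i.+1) + (\sum_(j < n) delta j) * g n.
Proof.
elim: n => [|n IHn]; first by rewrite !big_ord0 mul0r addr0.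
have sum_delta_S : \sum_(j < n.+1) delta j = \sum_(j < n) delta j + delta n.
  by rewrite big_ord_recr.
by rewrite big_ord_recr IHn /= [in RHS]big_ord_recr /= sum_delta_S; ring.
Qed.

Lemma abel_sum_ge0 (delta g : nat -> R) (n : nat) :
  (forall k, (k < n)%N -> 0 <= \sum_(j < k.+1) delta j) ->
  (forall i, (i < n)%N -> g i.+1 <= g i) -> 0 <= (\sum_(j < n) delta j) * g n ->
  0 <= \sum_(i < n) delta i * g i.
Proof.
move=> prefix_ge0 g_noninc last_ge0; rewrite abel_summation addr_ge0 //.
by apply: sumr_ge0 => i _; rewrite mulr_ge0 ?prefix_ge0 // subr_ge0 g_noninc.
Qed.

Lemma prefix_sum_map_enum (n j : nat) (f : 'I_n -> R) : (j <= n)%N ->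
  prefix_sum [seq f i | i <- enum 'I_n] j = \sum_(k < n | (k < j)%N) f k.
Proof.
move=> jn; rewrite /prefix_sum (big_ord_widen n (nth 0 [seq f i | i <- enum 'I_n]) jn).
by apply: eq_bigr => i _; rewrite (nth_map i) ?size_enum_ord // nth_ord_enum.
Qed.

Definition clamp01 (t : R) : R := Num.min 1 (Num.max 0 t).

Lemma clamp01_ge0 t : 0 <= clamp01 t.
Proof. by rewrite le_min ler01 le_max lexx. Qed.

Lemma clamp01_le t u : t <= u -> clamp01 t <= clamp01 u.
Proof. by move=> tu; rewrite le_min2 // le_max2. Qed.

Lemma clamp01_ge1 t : 1 <= t -> clamp01 t = 1.
Proof. by move=> t_ge1; apply/min_idPl; rewrite le_max t_ge1 orbT. Qed.

Lemma clamp01_le0 t : t <= 0 -> clamp01 t = 0.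
Proof. by move=> t_le0; rewrite /clamp01 (max_idPl t_le0); apply/min_idPr/ler01. Qed.

Lemma polygon_nat (r : seq R) (k : nat) : (k <= size r)%N ->
  polygon r k%:R = prefix_sum r k.
Proof.
move=> k_le; rewrite /polygon /prefix_sum (big_ord_widen _ (nth 0 r) k_le) [RHS]big_mkcond.
apply: eq_bigr => i _; rewrite -/(clamp01 _); case: ltnP => [ik | ki].
  by rewrite clamp01_ge1 ?mulr1 // lerBrDl natr1 ler_nat.
by rewrite clamp01_le0 ?mulr0 // subr_le0 ler_nat.
Qed.

Lemma polygon_le (r s : seq R) : size r = size s ->
  (forall k, (k <= size r)%N -> prefix_sum s k <= prefix_sum r k) ->
  forall x, polygon s x <= polygon r x.
Proof.
move=> size_rs prefix_le x; rewrite -subr_ge0 /polygon -size_rs -sumrB.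
under eq_bigr do rewrite -mulrBl.
apply: (abel_sum_ge0 (delta := fun i => r`_i - s`_i) (g := fun i => clamp01 (x - i%:R)))
  => [k k_lt | i _ |].
- by rewrite sumrB subr_ge0 prefix_le.
- by apply: clamp01_le; rewrite lerD2l lerN2 ler_nat.
- by rewrite mulr_ge0 ?clamp01_ge0 // sumrB subr_ge0 prefix_le.
Qed.

Lemma above_same_endE (N : nat) (r s : seq R) : size r = N -> size s = N ->
  above_same_end N r s <->
  (forall k, (k <= N)%N -> prefix_sum s k <= prefix_sum r k) /\ prefix_sum r N = prefix_sum s N.
Proof.
move=> size_r size_s; rewrite /above_same_end !polygon_nat ?size_r ?size_s //.
split=> [[polygon_ge end_eq] | [prefix_le end_eq]]; split=> //.
  by move=> k kN; rewrite -!polygon_nat ?size_r ?size_s // polygon_ge // ler0n ler_nat.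
by move=> x _; apply: polygon_le; rewrite ?size_r ?size_s.
Qed.

End PrefixSums.

Section Majorization.
Variable R : realDomainType.

Lemma sum_mul_indicator (I : finType) (F : I -> R) (P : pred I) :
  \sum_i F i * ((P i : nat)%:Z)%:~R = \sum_(i | P i) F i.
Proof. by rewrite [RHS]big_mkcond; apply: eq_bigr => i _; case: (P i); rewrite ?mulr1 ?mulr0. Qed.

Lemma sum_inord (n k : nat) (F : 'I_n.+1 -> R) : (k <= n.+1)%N ->
  \sum_(j < k) F (inord j) = \sum_(i < n.+1 | (i < k)%N) F i.
Proof.
move=> kn; rewrite (big_ord_widen _ (fun j => F (inord j)) kn).
by apply: eq_bigr => i _; rewrite inord_val.
Qed.

Lemma sum_perm_ltn (n k : nat) (f : 'S_n) (F : 'I_n -> R) :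
  \sum_(i < n | (i < k)%N) F (f i) = \sum_(x < n | (f^-1%g x < k)%N) F x.
Proof. by rewrite [RHS](reindex_inj (@perm_inj _ f)); apply: eq_bigl => i; rewrite permK. Qed.

(* Threshold at M = c (rho k): the values of c at points of A but not of B are >= M,
   those at points of B but not of A are <= M. *)
Lemma sum_smallest_le (n k : nat) (c : 'I_n -> R) (rho f : 'S_n) :
  (forall i j : 'I_n, (i <= j)%N -> c (rho i) <= c (rho j)) -> (k <= n)%N ->
  \sum_(i < n | (i < k)%N) c (rho i) <= \sum_(i < n | (i < k)%N) c (f i).
Proof.
case: k => [|k] c_rho_mono kn; first by rewrite !big_pred0.
pose M := c (rho (Ordinal kn)).
pose A x := (f^-1%g x < k.+1)%N; pose B x := (rho^-1%g x < k.+1)%N.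
have c_B x : B x -> c x <= M by move=> Bx; rewrite -(permKV rho x); apply: c_rho_mono.
have c_notB x : ~~ B x -> M <= c x.
  by rewrite /B -leqNgt => /ltnW Bx; rewrite -(permKV rho x); apply: c_rho_mono.
have sumM : \sum_(x | A x) M = \sum_(x | B x) M by rewrite -!sum_perm_ltn.
rewrite !sum_perm_ltn -subr_ge0.
have -> : \sum_(x | A x) c x - \sum_(x | B x) c x =
          \sum_(x | A x) (c x - M) - \sum_(x | B x) (c x - M).
  by rewrite !sumrB sumM; lra.
rewrite (bigID B) [X in _ - X](bigID A) /=.
have -> : \sum_(x | A x && B x) (c x - M) = \sum_(x | B x && A x) (c x - M).
  by apply: eq_bigl => x; rewrite andbC.
have A_notB_ge0 : 0 <= \sum_(x | A x && ~~ B x) (c x - M).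
  by apply: sumr_ge0 => x /andP[_ /c_notB]; rewrite subr_ge0.
have B_notA_le0 : \sum_(x | B x && ~~ A x) (c x - M) <= 0.
  by apply: sumr_le0 => x /andP[/c_B]; rewrite subr_le0.
lra.
Qed.

Lemma sum_ltn_ord (n : nat) (F : 'I_n -> R) : \sum_(i < n | (i < n)%N) F i = \sum_i F i.
Proof. by apply: eq_bigl => i; rewrite ltn_ord. Qed.

Lemma sum_perm (n : nat) (f : 'S_n) (F : 'I_n -> R) : \sum_i F (f i) = \sum_i F i.
Proof. by rewrite [RHS](reindex_inj (@perm_inj _ f)). Qed.

Variables (d : nat) (b c : 'I_d.+1 -> R).

(* Test against the indicator of the [k] arguments [rho i], [i < k]. *)
Lemma pairing_bounded_prefix (rho : 'S_d.+1) (k : nat) : pairing_bounded b c ->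
  \sum_(i < d.+1 | (i < k)%N) b i <= \sum_(i < d.+1 | (i < k)%N) c (rho i).
Proof.
move=> bounded.
pose l : Lam d := [ffun x => ((rho^-1%g x < k)%N : nat)%:Z].
pose m : Lam d := [ffun j : 'I_d.+1 => ((j < k)%N : nat)%:Z].
have rho_l : actW rho^-1 l = m by apply/ffunP => j; rewrite !ffunE invgK permK.
have anti_m : antidom m.
  apply/forallP => i; apply/forallP => j; apply/implyP => ji; rewrite !ffunE lez_nat.
  by case: (ltnP i k) => [/(ltn_trans ji) -> | _].
have dom_l : actW (dom_perm l) l = m.
  by rewrite (antidom_actW_eq (antidom_dom_perm l) (w' := rho^-1%g)) ?rho_l.
have := bounded l; rewrite dom_l sum_perm_ltn.
under eq_bigr do rewrite ffunE; under [X in _ <= X]eq_bigr do rewrite ffunE.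
rewrite (sum_mul_indicator b (fun j => j < k)%N).
by rewrite (sum_mul_indicator c (fun x => rho^-1%g x < k)%N).
Qed.

Lemma pairing_bounded_sum : pairing_bounded b c -> \sum_i b i = \sum_i c i.
Proof.
move=> bounded.
have const_bound (z : int) : (\sum_i b i) * z%:~R <= (\sum_i c i) * z%:~R.
  pose cst : Lam d := [ffun=> z].
  have := bounded cst; rewrite !mulr_suml.
  have -> : actW (dom_perm cst) cst = cst by apply/ffunP => j; rewrite !ffunE.
  by under eq_bigr do rewrite ffunE; under [X in _ <= X -> _]eq_bigr do rewrite ffunE.
by have := const_bound 1; have := const_bound (-1); rewrite mulr1 mulrN1; lra.
Qed.

End Majorization.

Section PairingBound.
Variables (R : realType) (d : nat) (b c : 'I_d.+1 -> R).

(* Abel summation against the nonincreasing [u = w l] reduces the bound to sums of [k]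
   values of [c], which dominate the sums of the [k] smallest ones. *)
Lemma prefix_pairing_bounded (rho : 'S_d.+1) :
  (forall i j : 'I_d.+1, (i <= j)%N -> c (rho i) <= c (rho j)) ->
  (forall k, (k <= d.+1)%N ->
     \sum_(i < d.+1 | (i < k)%N) b i <= \sum_(i < d.+1 | (i < k)%N) c (rho i)) ->
  \sum_i b i = \sum_i c i -> pairing_bounded b c.
Proof.
move=> c_rho_mono prefix_le sum_bc l.
have := antidom_dom_perm l; set w := dom_perm l; set u := actW w l => anti_u.
have -> : \sum_i c i * (l i)%:~R = \sum_k c (w^-1%g k) * (u k)%:~R.
  rewrite (sum_actW _ _ (fun k m => c (w^-1%g k) * m%:~R)).
  by under [RHS]eq_bigr do rewrite permK.
rewrite -subr_ge0 -sumrB.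
pose delta j := c (w^-1%g (inord j)) - b (inord j).
pose g j := (u (inord (minn j d)))%:~R : R.
have -> : \sum_k (c (w^-1%g k) * (u k)%:~R - b k * (u k)%:~R) = \sum_(j < d.+1) delta j * g j.
  apply: eq_bigr => j _; rewrite /delta /g.
  have -> : minn j d = j by apply/minn_idPl; rewrite -ltnS.
  by rewrite inord_val mulrBl.
have prefix_delta k : (k <= d.+1)%N -> \sum_(j < k) delta j =
    \sum_(i < d.+1 | (i < k)%N) c (w^-1%g i) - \sum_(i < d.+1 | (i < k)%N) b i.
  by move=> kd; rewrite sumrB (sum_inord (fun i => c (w^-1%g i))) // sum_inord.
apply: abel_sum_ge0 => [k kd | j jd |].
- rewrite prefix_delta // subr_ge0 (le_trans (prefix_le _ kd)) //.
  exact: sum_smallest_le.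
- rewrite /g /= ler_int; case: (ltnP j d) => [jd' | dj].
    rewrite (minn_idPl jd').
    by move/forallP/(_ (inord j.+1))/forallP/(_ (inord j))/implyP: anti_u; apply; rewrite !inordK.
  by rewrite !(minn_idPr _) // ltnW.
- by rewrite prefix_delta // !sum_ltn_ord sum_perm sum_bc subrr mul0r.
Qed.

Lemma pairing_boundedP : pairing_bounded b c <->
  above_same_end d.+1 (rdom [seq c i | i <- enum 'I_d.+1]) [seq b i | i <- enum 'I_d.+1].
Proof.
have [rho sort_c c_rho_mono] := sort_map_enum c.
rewrite /rdom sort_c above_same_endE ?size_map -?enumT ?size_enum_ord //.
split=> [bounded | [prefix_le sum_bc]].
  split=> [k kd|]; first by rewrite !prefix_sum_map_enum // pairing_bounded_prefix.
  by rewrite !prefix_sum_map_enum // !sum_ltn_ord sum_perm (pairing_bounded_sum bounded).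
apply: (prefix_pairing_bounded c_rho_mono).
  by move=> k kd; move: (prefix_le k kd); rewrite !prefix_sum_map_enum.
by move: sum_bc; rewrite !prefix_sum_map_enum // !sum_ltn_ord sum_perm.
Qed.

End PairingBound.

Unset Implicit Arguments.
Theorem lemma5p1 (R : realType) (K : fieldType) (v : K -> R) (absK : K -> R)
    (pi : K) (q degL d : nat) (a : 'I_d.+1 -> int)
    (Hv : is_valuation v)
    (Habs : forall x : K, x != 0 -> absK x = powR (q%:R^-1) (v x))
    (Habs0 : absK 0 = 0)
    (Hq : (1 < q)%N) (Hq0 : (q%:R : K) != 0)
    (Hpi0 : pi != 0) (Hvpi : v pi = 1)
    (HdegL : (0 < degL)%N) (Hvq : v (q%:R : K) = degL%:R)
    (Ha : forall i j : 'I_d.+1, (i <= j)%N -> a i <= a j)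
    (zeta : Lam d -> K) (Hzeta : is_char zeta) :
  in_Txi absK q pi a zeta <->
  above_same_end d.+1
    (rdom [seq v (zeta_coord q pi a zeta i) | i <- enum 'I_d.+1])
    [seq (a i)%:~R + (i : nat)%:R * degL%:R | i <- enum 'I_d.+1].
Proof.
rewrite (in_TxiE a Hv Hq0 Hpi0 Hvpi Hvq Habs Hq Hzeta).
exact: pairing_boundedP.
Qed.
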